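(* For a topological monoid $S$ with unit $e$, the following are equivalent: (1) the quasi-uniformity $\mathcal L\wedge\mathcal R$ generates the topology of $S$; (2) $e$ is an open unit of $S$; (3) $S$ has open central shifts. Moreover, conditions (1)–(3) imply (4): the quasi-uniformity $\mathcal L\wedge\mathcal R$ is rotund.
   Context: A topological monoid is a topological space with a continuous associative multiplication having a unit $e$. Let $\mathcal N_e$ be a neighborhood base at $e$. $\mathcal L\wedge\mathcal R$ is the quasi-uniformity on $S$ generated by the base $\{\{(x,y)\in S\times S:y\in UxV\}:U,V\in\mathcal N_e\}$; it generates the topology of $S$ if the topology $\{W: \forall x\in W\ \exists E\in\mathcal L\wedge\mathcal R,\ \{y:(x,y)\in E\}\subset W\}$ equals the given topology. $e$ is an open unit if $UxU$ is a neighborhood of $x$ for every neighborhood $U$ of $e$ and every $x\in S$. $S$ has open central shifts if for each $a\in S$ the map $S\times S\to S$, $(x,y)\mapsto xay$, is open. For an entourage $E$ let $B(x;E)=\{y:(x,y)\in E\}$, $B(A;E)=\bigcup_{a\in A}B(a;E)$, $E\circ F=\{(x,z):\exists y\,((x,y)\in E,(y,z)\in F)\}$. A quasi-uniformity is rotund if it has a base closed under $\circ$ which is rotund: $B(\overline A;U)\subset\overline{B(A;W\circ U)}$ for all $A\subset S$ and all $U,W$ in the base (closures in the topology of $S$). *)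

From mathcomp Require Import all_boot all_order.
From mathcomp Require Import all_classical topology.
Set Implicit Arguments. Unset Strict Implicit. Unset Printing Implicit Defensive.
Local Open Scope classical_set_scope.

Section Monoid.
Context {T : topologicalType} (mul : T -> T -> T) (e : T).

Definition topological_monoid : Prop :=
  continuous (fun p : T * T => mul p.1 p.2) /\
  (forall x y z, mul x (mul y z) = mul (mul x y) z) /\
  (forall x, mul e x = x) /\ (forall x, mul x e = x).

Definition triple_prod (U : set T) (x : T) (V : set T) : set T :=
  [set mul (mul u x) v | u in U & v in V].

Definition LR_basic (U V : set T) : set (T * T) :=
  [set p | triple_prod U p.1 V p.2].

(* the quasi-uniformity L /\ R: filter generated by the basic entourages,
   U, V ranging over the neighborhoods of e *)
Definition LR_entourage (E : set (T * T)) : Prop :=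
  exists U V, nbhs e U /\ nbhs e V /\ LR_basic U V `<=` E.

End Monoid.

Definition ball_ent {T : Type} (x : T) (E : set (T * T)) : set T := [set y | E (x, y)].
Definition ball_set {T : Type} (A : set T) (E : set (T * T)) : set T :=
  \bigcup_(a in A) ball_ent a E.
Definition ent_comp {T : Type} (E F : set (T * T)) : set (T * T) :=
  [set p | exists y, E (p.1, y) /\ F (y, p.2)].

Definition qu_open {T : Type} (ent : set (T * T) -> Prop) (W : set T) : Prop :=
  forall x, W x -> exists E, ent E /\ ball_ent x E `<=` W.

Definition qu_generates_topology {T : topologicalType} (ent : set (T * T) -> Prop) : Prop :=
  forall W : set T, open W <-> qu_open ent W.

Definition open_unit {T : topologicalType} (mul : T -> T -> T) (e : T) : Prop :=
  forall U : set T, nbhs e U -> forall x, nbhs x (triple_prod mul U x U).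

Definition open_map {X Y : topologicalType} (f : X -> Y) : Prop :=
  forall O : set X, open O -> open (f @` O).

Definition open_central_shifts {T : topologicalType} (mul : T -> T -> T) : Prop :=
  forall a : T, open_map (fun p : T * T => mul (mul p.1 a) p.2).

Definition qu_base {T : Type} (ent : set (T * T) -> Prop) (B : set (set (T * T))) : Prop :=
  (forall E, B E -> ent E) /\ (forall E, ent E -> exists2 F, B F & F `<=` E).

Definition rotund_family {T : topologicalType} (B : set (set (T * T))) : Prop :=
  forall (A : set T) (U W : set (T * T)), B U -> B W ->
    ball_set (closure A) U `<=` closure (ball_set A (ent_comp W U)).

Definition qu_rotund {T : topologicalType} (ent : set (T * T) -> Prop) : Prop :=
  exists B : set (set (T * T)), qu_base ent B /\
    (forall U W, B U -> B W -> B (ent_comp U W)) /\ rotund_family B.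

(** The neighbourhoods of a point x for the topology of L/\R are the sets
    containing some U x V.  Continuity of (u, v) |-> u x v at (e, e) makes every
    open set L/\R-open, and an open unit makes every U x V a neighbourhood of x,
    which gives the converse; conversely, if L/\R generates the topology, the set
    of points y with some U' y V' inside U x U is L/\R-open (shrink U' and V'
    into products of smaller neighbourhoods of e), hence a neighbourhood of x
    inside U x U.  A central shift maps a box around (u, v) onto a set containing
    (U u) a (v U) = U (u a v) U, and conversely U x U contains the image of O x O
    under the central shift by x.  Rotundity holds in every topological monoid:
    if a is in the closure of A and z is in U a V, continuity of multiplication
    gives a' in A near a with u a' v near z, and (a', u a' v) is in W o U. *)
From mathcomp Require Import all_boot all_order.
From mathcomp Require Import all_classical topology.
Local Open Scope classical_set_scope.

Lemma nbhs_pairP {X Y : topologicalType} (x : X) (y : Y) (O : set (X * Y)) :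
  nbhs (x, y) O ->
  exists A B, nbhs x A /\ nbhs y B /\ forall a b, A a -> B b -> O (a, b).
Proof.
case=> -[A B] /= [xA yB] sABO.
by exists A, B; do 2 split => //; move=> a b Aa Bb; apply: (sABO (a, b)).
Qed.

Definition LR_base {T : topologicalType} (mul : T -> T -> T) (e : T) :
    set (set (T * T)) :=
  [set E | exists U V, nbhs e U /\ nbhs e V /\ E = LR_basic mul U V].

Section TopologicalMonoid.
Variables (T : topologicalType) (mul : T -> T -> T) (e : T).
Hypothesis mul_cont : continuous (fun p : T * T => mul p.1 p.2).
Hypothesis mulA : forall x y z, mul x (mul y z) = mul (mul x y) z.
Hypothesis mul1x : forall x, mul e x = x.
Hypothesis mulx1 : forall x, mul x e = x.

Lemma nbhs_mul_prod {x y N} : nbhs (mul x y) N ->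
  exists A B, nbhs x A /\ nbhs y B /\ forall a b, A a -> B b -> N (mul a b).
Proof.
move=> /(mul_cont (x, y)) /nbhs_pairP [A [B [xA [yB sABN]]]].
by exists A, B; do 2 split => //; move=> a b Aa Bb; apply: sABN.
Qed.

Lemma nbhs_mul3_prod {x y z N} : nbhs (mul (mul x y) z) N ->
  exists P Q R, nbhs x P /\ nbhs y Q /\ nbhs z R /\
    forall p q r, P p -> Q q -> R r -> N (mul (mul p q) r).
Proof.
move=> /nbhs_mul_prod [A [R [xyA [zR sARN]]]].
have [P [Q [xP [yQ sPQA]]]] := nbhs_mul_prod xyA.
exists P, Q, R; do 3 split => //.
by move=> p q r Pp Qq Rr; apply: sARN => //; apply: sPQA.
Qed.

Lemma triple_prod_self U V x : nbhs e U -> nbhs e V -> triple_prod mul U x V x.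
Proof.
move=> /nbhs_singleton Ue /nbhs_singleton Ve.
by exists e => //; exists e => //; rewrite mul1x mulx1.
Qed.

Lemma nbhs_e_mul U V : nbhs e U -> nbhs e V ->
  nbhs e [set mul u v | u in U & v in V].
Proof.
move=> eU /nbhs_singleton Ve; apply: filterS eU => u Uu.
by exists u => //; exists e => //; rewrite mulx1.
Qed.

Lemma LR_basic_subset U V U' V' :
  U `<=` U' -> V `<=` V' -> LR_basic mul U V `<=` LR_basic mul U' V'.
Proof.
move=> sUU' sVV' [x y] [u Uu [v Vv /= <-]].
by exists u; [exact: sUU' | exists v => //; exact: sVV'].
Qed.

Lemma ent_comp_LR_basic U1 V1 U2 V2 :
  ent_comp (LR_basic mul U1 V1) (LR_basic mul U2 V2) =
  LR_basic mul [set mul u2 u1 | u2 in U2 & u1 in U1]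
               [set mul v1 v2 | v1 in V1 & v2 in V2].
Proof.
apply/seteqP; split => -[x z]; rewrite /ent_comp /LR_basic /=.
- move=> [y [[u1 Uu1 [v1 Vv1 <-]] [u2 Uu2 [v2 Vv2 <-]]]].
  exists (mul u2 u1); first by exists u2 => //; exists u1.
  exists (mul v1 v2); first by exists v1 => //; exists v2.
  by rewrite !mulA.
- move=> [_ [u2 Uu2 [u1 Uu1 <-]] [_ [v1 Vv1 [v2 Vv2 <-]] <-]].
  exists (mul (mul u1 x) v1); split; first by exists u1 => //; exists v1.
  by exists u2 => //; exists v2 => //; rewrite !mulA.
Qed.

Lemma LR_basic_half {U V} : nbhs e U -> nbhs e V ->
  exists U' V', nbhs e U' /\ nbhs e V' /\
    ent_comp (LR_basic mul U' V') (LR_basic mul U' V') `<=` LR_basic mul U V.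
Proof.
rewrite -{1}[e]mul1x => /nbhs_mul_prod [U1 [U2 [eU1 [eU2 sUU]]]].
rewrite -{1}[e]mul1x => /nbhs_mul_prod [V1 [V2 [eV1 [eV2 sVV]]]].
exists (U1 `&` U2), (V1 `&` V2); split; first exact: filterI.
split; first exact: filterI.
rewrite ent_comp_LR_basic; apply: LR_basic_subset.
- by move=> _ [u2 [U1u2 _] [u1 [_ U2u1] <-]]; apply: sUU.
- by move=> _ [v1 [V1v1 _] [v2 [_ V2v2] <-]]; apply: sVV.
Qed.

Lemma open_LR_open W : open W -> qu_open (LR_entourage mul e) W.
Proof.
move=> oW x Wx.
have : nbhs (mul (mul e x) e) W by rewrite mul1x mulx1; exact: open_nbhs_nbhs.
move=> /nbhs_mul3_prod [P [Q [R [eP [xQ [eR sPQRW]]]]]].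
exists (LR_basic mul P R); split; first by exists P, R; do 2 split => //.
move=> y [u Pu [v Rv /= <-]]; apply: sPQRW => //; exact: nbhs_singleton.
Qed.

Lemma LR_generates_open_unit :
  qu_generates_topology (LR_entourage mul e) -> open_unit mul e.
Proof.
move=> gen U eU x.
pose W := [set y | exists P Q, nbhs e P /\ nbhs e Q /\
  triple_prod mul P y Q `<=` triple_prod mul U x U].
have oW : open W.
  apply/gen => y [P [Q [eP [eQ sPyQ]]]].
  have [P' [Q' [eP' [eQ' halfPQ]]]] := LR_basic_half eP eQ.
  exists (LR_basic mul P' Q'); split; first by exists P', Q'; do 2 split => //.
  move=> z yz; exists P', Q'; do 2 split => //.
  by move=> w zw; apply: sPyQ; apply: (halfPQ (y, w)); exists z.
have : nbhs x W.
  by apply: open_nbhs_nbhs; split => //; exists U, U; do 2 split => //.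
by apply: filterS => y [P [Q [eP [eQ sPyQ]]]]; apply: sPyQ; apply: triple_prod_self.
Qed.

Lemma open_unit_nbhs_triple_prod {U V} x : open_unit mul e ->
  nbhs e U -> nbhs e V -> nbhs x (triple_prod mul U x V).
Proof.
move=> ou eU eV; apply: filterS (ou _ (filterI eU eV) x).
by move=> _ [u [Uu _] [v [_ Vv] <-]]; exists u => //; exists v.
Qed.

Lemma open_unit_LR_generates :
  open_unit mul e -> qu_generates_topology (LR_entourage mul e).
Proof.
move=> ou W; split; first exact: open_LR_open.
move=> qW; rewrite openE => x Wx.
have [E [[U [V [eU [eV sUVE]]]] sEW]] := qW x Wx.
apply: filterS (open_unit_nbhs_triple_prod x ou eU eV) => y xy.
exact/sEW/sUVE.
Qed.

Lemma open_unit_central_shifts : open_unit mul e -> open_central_shifts mul.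
Proof.
move=> ou a O oO; rewrite openE => _ [[y w] Oyw <-].
have /nbhs_pairP [A [B [yA [wB sABO]]]] : nbhs (y, w) O by exact: open_nbhs_nbhs.
have [U [Y [eU [yY sUYA]]]] : exists U Y, nbhs e U /\ nbhs y Y /\
    forall u y', U u -> Y y' -> A (mul u y').
  by apply: nbhs_mul_prod; rewrite mul1x.
have [W [V [wW [eV sWVB]]]] : exists W V, nbhs w W /\ nbhs e V /\
    forall w' v, W w' -> V v -> B (mul w' v).
  by apply: nbhs_mul_prod; rewrite mulx1.
apply: filterS (open_unit_nbhs_triple_prod (mul (mul y a) w) ou eU eV).
move=> _ [u Uu [v Vv <-]] /=; exists (mul u y, mul w v); last by rewrite /= !mulA.
by apply: sABO; [apply: sUYA | apply: sWVB] => //; exact: nbhs_singleton.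
Qed.

Lemma central_shifts_open_unit : open_central_shifts mul -> open_unit mul e.
Proof.
move=> ocs U eU x; move: eU; rewrite nbhsE => -[O [oO Oe] sOU].
have oOO : open (O `*` O).
  rewrite openE => -[p q] [/= Op Oq].
  by exists (O, O) => //=; split; apply: open_nbhs_nbhs.
have : nbhs x ((fun p : T * T => mul (mul p.1 x) p.2) @` (O `*` O)).
  by apply: open_nbhs_nbhs; split; [exact: ocs | exists (e, e); rewrite //= mul1x mulx1].
apply: filterS => _ [[p q] [/= Op Oq] <-].
by exists p; [exact: sOU | exists q => //; exact: sOU].
Qed.

Lemma LR_base_qu_base : qu_base (LR_entourage mul e) (LR_base mul e).
Proof.
split; first by move=> _ [U [V [eU [eV ->]]]]; exists U, V; do 2 split => //.
by move=> E [U [V [eU [eV sUVE]]]]; exists (LR_basic mul U V) => //; exists U, V; do 2 split => //.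
Qed.

Lemma LR_base_ent_comp E F :
  LR_base mul e E -> LR_base mul e F -> LR_base mul e (ent_comp E F).
Proof.
move=> [U1 [V1 [eU1 [eV1 ->]]]] [U2 [V2 [eU2 [eV2 ->]]]].
rewrite ent_comp_LR_basic.
by do 2!eexists; split; last split; last reflexivity; exact: nbhs_e_mul.
Qed.

Lemma LR_base_rotund : rotund_family (LR_base mul e).
Proof.
move=> A _ _ [U [V [eU [eV ->]]]] [U' [V' [eU' [eV' ->]]]].
move=> _ [a clAa [u Uu [v Vv /= <-]]] N /nbhs_mul3_prod [P [Q [R [uP [aQ [vR sPQRN]]]]]].
have [a' [Aa' Qa']] := clAa Q aQ.
exists (mul (mul u a') v); split; last by apply: sPQRN => //; exact: nbhs_singleton.
exists a' => //; exists a'; split; first exact: triple_prod_self.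
by exists u => //; exists v.
Qed.

Lemma LR_rotund : qu_rotund (LR_entourage mul e).
Proof.
exists (LR_base mul e); split; first exact: LR_base_qu_base.
by split; [exact: LR_base_ent_comp | exact: LR_base_rotund].
Qed.

End TopologicalMonoid.

Theorem proposition5p1 (T : topologicalType) (mul : T -> T -> T) (e : T) :
  topological_monoid mul e ->
  (qu_generates_topology (LR_entourage mul e) <-> open_unit mul e) /\
  (open_unit mul e <-> open_central_shifts mul) /\
  (open_unit mul e -> qu_rotund (LR_entourage mul e)).
Proof.
move=> [mul_cont [mulA [mul1x mulx1]]].
split; [split|split; [split|]].
- exact: LR_generates_open_unit.
- exact: open_unit_LR_generates.
- exact: open_unit_central_shifts.
- exact: central_shifts_open_unit.
- by move=> _; exact: LR_rotund.
Qed.
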